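(* For every integer $n\geq 4$, $$\dot{\imath}_{[1,2]}(P_4\Box P_n)=\begin{cases} n+1 & \text{if } n\in\{5,6,9\},\\ n & \text{otherwise.}\end{cases}$$
   Context: $P_k$ denotes the path on $k$ vertices and $P_m\Box P_n$ the Cartesian product of two paths (the $m\times n$ grid graph). A set $S$ of vertices of a graph $G$ is independent if no two vertices of $S$ are adjacent, and dominating if every vertex not in $S$ has at least one neighbor in $S$. An independent $[1,2]$-set of $G$ is an independent dominating set $S$ such that every vertex $v\in V(G)\setminus S$ has at least one and at most two neighbors in $S$. When $G$ has an independent $[1,2]$-set, $\dot{\imath}_{[1,2]}(G)$ denotes the minimum cardinality of an independent $[1,2]$-set of $G$ (the statement includes the existence of such a set). *)

From mathcomp Require Import all_boot.
Set Implicit Arguments. Unset Strict Implicit. Unset Printing Implicit Defensive.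

Definition grid_vertex (m n : nat) : finType := ('I_m * 'I_n)%type.

Definition nat_adj (a b : nat) : bool := (a.+1 == b) || (b.+1 == a).

Definition grid_adj (m n : nat) (u v : grid_vertex m n) : bool :=
  ((u.1 == v.1) && nat_adj u.2 v.2) || ((u.2 == v.2) && nat_adj u.1 v.1).

Definition independent (m n : nat) (S : {set grid_vertex m n}) : bool :=
  [forall u in S, forall v in S, ~~ grid_adj u v].

Definition indep_12_set (m n : nat) (S : {set grid_vertex m n}) : bool :=
  independent S &&
  [forall v in ~: S, (1 <= #|[set u in S | grid_adj v u]| <= 2)].

Definition i12_grid_eq (m n k : nat) : Prop :=
  (exists S : {set grid_vertex m n}, indep_12_set S && (#|S| == k)) /\
  (forall S : {set grid_vertex m n}, indep_12_set S -> k <= #|S|).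

From mathcomp Require Import all_boot zify.
Set Implicit Arguments. Unset Strict Implicit. Unset Printing Implicit Defensive.

(* Transfer-matrix method.  Reading a vertex set of P_m □ P_n column by column,
   being an independent [1,2]-set is a condition on each column together with
   its two neighbouring columns.  Hence the least size of such a set is computed
   by a dynamic programme over pairs of consecutive columns, minimising the total
   weight.  For m = 4 the programme, run by computation, yields the claimed values
   for n <= 12, and its table for n = 13 is the one for n = 12 shifted by 1; by
   induction every later table is a shift too, so the minimum is n for n >= 12. *)

Definition ominn (x y : option nat) : option nat :=
  match x, y with
  | Some a, Some b => Some (minn a b)
  | Some _, None => x
  | None, _ => y
  end.

Section OptionMinimum.
Variable T : eqType.
Implicit Types (g : T -> option nat) (s : seq T).

Definition omin_seq g s : option nat := foldr (fun x acc => ominn (g x) acc) None s.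

Lemma omin_seq_le g s x v :
  x \in s -> g x = Some v -> exists2 w, omin_seq g s = Some w & w <= v.
Proof.
elim: s => [|y s IHs] //; rewrite inE => /predU1P [<- gx|xs gx] /=.
  rewrite gx; case: (omin_seq g s) => [w|] /=; last by exists v.
  by exists (minn v w); rewrite ?geq_minl.
have [w -> le_wv] := IHs xs gx.
case: (g y) => [u|] /=; last by exists w.
by exists (minn u w); rewrite // geq_min le_wv orbT.
Qed.

Lemma omin_seq_some g s w :
  omin_seq g s = Some w -> exists2 x, x \in s & g x = Some w.
Proof.
elim: s w => [|y s IHs] w //=.
case gy: (g y) => [u|] /=; last by case/IHs => x xs gx; exists x; rewrite ?inE ?xs ?orbT.
case os: (omin_seq g s) => [u'|] /= [<-]; last by exists y; rewrite ?inE ?eqxx.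
case: (leqP u u') => _; first by exists y; rewrite ?inE ?eqxx.
by have [x xs gx] := IHs _ os; exists x; rewrite ?inE ?xs ?orbT.
Qed.

Lemma eq_in_omin_seq g1 g2 s : {in s, g1 =1 g2} -> omin_seq g1 s = omin_seq g2 s.
Proof.
elim: s => [|y s IHs] //= eq_g; rewrite eq_g ?mem_head // IHs // => x xs.
by rewrite eq_g // inE xs orbT.
Qed.

Lemma omin_seq_addn d g s :
  omin_seq (fun x => omap (addn d) (g x)) s = omap (addn d) (omin_seq g s).
Proof.
elim: s => [|y s IHs] //=; rewrite IHs.
by case: (g y) => [u|]; case: (omin_seq g s) => [u'|] //=; rewrite addn_minr.
Qed.

End OptionMinimum.

(* The table is indexed by [key]; the equality test makes the lookup correct
   whatever the key, so [key] only matters for speed. *)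
Definition tabulate (T : eqType) (R : Type) (key : T -> nat) (dom : seq T) (f : T -> R) :=
  let tbl := [seq (x, f x) | x <- dom] in
  fun x => if onth tbl (key x) is Some (y, v) then (if y == x then v else f x) else f x.

Lemma tabulateE (T : eqType) (R : Type) (key : T -> nat) dom (f : T -> R) x :
  tabulate key dom f x = f x.
Proof.
rewrite /tabulate onth_map; case: (onth dom (key x)) => [y|] //=.
by case: eqP => [->|].
Qed.

Fixpoint bool_seqs k : seq (seq bool) :=
  if k is k'.+1 then [seq b :: c | b <- [:: false; true], c <- bool_seqs k'] else [:: [::]].

Lemma mem_bool_seqs k c : (c \in bool_seqs k) = (size c == k).
Proof.
elim: k c => [|k IHk] [|b c] //=; rewrite cats0 mem_cat.
  by apply/negP => /orP [] /mapP [].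
have cons_inj b' : injective (cons b') by move=> ? ? [].
have notin_cons b' l : (~~ b' :: c \in map (cons b') l) = false.
  by apply/mapP => -[x _ []]; case: b'.
by case: b; rewrite ?(notin_cons true) ?(notin_cons false) (mem_map (cons_inj _ _)) IHk ?orbF.
Qed.

Definition bits_code (c : seq bool) : nat := foldl (fun acc (b : bool) => acc.*2 + b) 0 c.

Section TransferMatrix.
Variable m : nat.

Definition cell (c : seq bool) (i : nat) : bool := nth false c i.
Definition empty_col : seq bool := nseq m false.
Definition col_weight (c : seq bool) : nat := count id c.

Definition nbr_count (a b c : seq bool) (i : nat) : nat :=
  cell a i + cell c i + cell b i.+1 + (if i is i'.+1 then cell b i' else false).

(* [b] is a column of an independent [1,2]-set whose left and right neighbouring
   columns are [a] and [c].  Only the edges inside [b] and between [a] and [b]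
   are tested, so that along a sequence of columns each edge is tested once. *)
Definition admissible (a b c : seq bool) : bool :=
  all (fun i => [&& ~~ (cell b i && cell b i.+1), ~~ (cell a i && cell b i)
                  & cell b i || (1 <= nbr_count a b c i <= 2)]) (iota 0 m).

Definition col_pairs : seq (seq bool * seq bool) :=
  [seq (a, b) | a <- bool_seqs m, b <- bool_seqs m].

Definition extend (f : seq bool * seq bool -> option nat) (s : seq bool * seq bool) :=
  omin_seq (fun a => if admissible a s.1 s.2 then omap (addn (col_weight s.2)) (f (a, s.1))
                     else None) (bool_seqs m).

(* [best k (b, c)] is the least total weight of columns [g 0, ..., g k] of size [m]
   with [g k.-1 = b], [g k = c] (and [g (-1)] empty), the columns [g 0, ..., g k.-1]
   being admissible. *)
Fixpoint best k : seq bool * seq bool -> option nat :=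
  if k is k'.+1 then tabulate (fun s => bits_code (s.1 ++ s.2)) col_pairs (extend (best k'))
  else fun s => if s.1 == empty_col then Some (col_weight s.2) else None.

Definition best_final k : option nat :=
  let f := best k in
  omin_seq (fun s => if admissible s.1 s.2 empty_col then f s else None) col_pairs.

Definition prev_col (g : nat -> seq bool) j := if j is j'.+1 then g j' else empty_col.

Definition admissible_upto (g : nat -> seq bool) k :=
  forall j, j < k -> admissible (prev_col g j) (g j) (g j.+1).

Lemma size_empty_col : size empty_col = m.
Proof. exact: size_nseq. Qed.

Lemma cell_empty_col i : cell empty_col i = false.
Proof. by rewrite /cell nth_nseq if_same. Qed.

Lemma admissibleP a b c :
  reflect (forall i, i < m -> [&& ~~ (cell b i && cell b i.+1), ~~ (cell a i && cell b i)
                                & cell b i || (1 <= nbr_count a b c i <= 2)])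
          (admissible a b c).
Proof.
by apply: (iffP allP) => adm i; [move=> lt_im | rewrite mem_iota => /andP [_]]; apply: adm;
  rewrite ?mem_iota.
Qed.

Lemma size_prev_col g j : (forall j, size (g j) = m) -> size (prev_col g j) = m.
Proof. by move=> g_m; case: j => [|j] /=; rewrite ?size_empty_col. Qed.

Lemma admissible_uptoS g k :
  admissible_upto g k.+1 <-> admissible_upto g k /\ admissible (prev_col g k) (g k) (g k.+1).
Proof.
split=> [adm | [adm adm_k] j]; first by split=> [j lt_jk|]; apply: adm; rewrite // ltnW.
by rewrite ltnS leq_eqVlt => /predU1P [-> // | /adm].
Qed.

Lemma eq_admissible_upto g1 g2 k : g1 =1 g2 -> admissible_upto g1 k -> admissible_upto g2 k.
Proof. by move=> eq_g adm j /adm; case: j => [|j] /=; rewrite !eq_g. Qed.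

Lemma mem_col_pairs s : (s \in col_pairs) = (size s.1 == m) && (size s.2 == m).
Proof.
apply/allpairsP/andP => [[[a b] [a_m b_m ->]] | [a_m b_m]].
  by rewrite -!mem_bool_seqs.
by exists s; rewrite !mem_bool_seqs a_m b_m; case: s {a_m b_m}.
Qed.

Lemma bestS k s : best k.+1 s = extend (best k) s.
Proof. exact: tabulateE. Qed.

Lemma eq_extend f1 f2 s :
  size s.1 = m -> {in col_pairs, f1 =1 f2} -> extend f1 s = extend f2 s.
Proof.
move=> s1_m eq_f; apply: eq_in_omin_seq => a a_m; rewrite eq_f //.
by rewrite mem_col_pairs -mem_bool_seqs a_m s1_m /=.
Qed.

Lemma extend_addn d f s :
  extend (fun s => omap (addn d) (f s)) s = omap (addn d) (extend f s).
Proof.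
rewrite /extend -omin_seq_addn; apply: eq_in_omin_seq => a _.
by case: (admissible _ _ _); case: (f _) => //= v; rewrite addnCA.
Qed.

Lemma extend_le f a b c v :
  a \in bool_seqs m -> admissible a b c -> f (a, b) = Some v ->
  exists2 w, extend f (b, c) = Some w & w <= col_weight c + v.
Proof.
move=> a_m adm f_ab; apply: (omin_seq_le (g := fun a => if admissible a b c then _ else _) a_m).
by rewrite adm f_ab.
Qed.

Lemma extend_some f b c w : extend f (b, c) = Some w ->
  exists a v, [/\ a \in bool_seqs m, admissible a b c, f (a, b) = Some v & w = col_weight c + v].
Proof.
case/omin_seq_some => a a_m /=; case: ifP => // adm.
by case f_ab: (f (a, b)) => [v|] //= [<-]; exists a, v.
Qed.

Lemma best_le g k :
  (forall j, size (g j) = m) -> admissible_upto g k ->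
  exists2 v, best k (prev_col g k, g k) = Some v & v <= \sum_(j < k.+1) col_weight (g j).
Proof.
move=> g_m; elim: k => [|k IHk] adm.
  by exists (col_weight (g 0)); rewrite /= ?eqxx ?big_ord1.
case/admissible_uptoS: adm => /IHk [v best_v le_v] adm_k.
have prev_m : prev_col g k \in bool_seqs m by rewrite mem_bool_seqs size_prev_col.
have [w ext_w le_w] := extend_le prev_m adm_k best_v.
exists w; first by rewrite bestS.
by rewrite big_ord_recr /= addnC (leq_trans le_w) // leq_add2l.
Qed.

Lemma best_some k s v : s \in col_pairs -> best k s = Some v ->
  exists g, [/\ forall j, size (g j) = m, admissible_upto g k, (prev_col g k, g k) = s,
               \sum_(j < k.+1) col_weight (g j) = v & forall j, k < j -> g j = empty_col].
Proof.
elim: k s v => [|k IHk] [b c] v; rewrite mem_col_pairs => /andP [/eqP b_m /eqP c_m].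
  rewrite /=; case: eqP => // -> [<-].
  exists (fun j => if j == 0 then c else empty_col); split => //.
  - by case=> [|j] //; rewrite size_empty_col.
  - by rewrite big_ord1.
  - by case.
rewrite bestS => /extend_some [a [u [a_m adm_abc best_ab ->]]].
have [|g [g_m adm_g [prev_g gk] <- g_0]] := IHk _ _ _ best_ab.
  by rewrite mem_col_pairs -mem_bool_seqs a_m b_m /=.
pose g' j := if j == k.+1 then c else g j.
have prev_g' j : j <= k -> prev_col g' j = prev_col g j.
  by case: j => [|j] le_jk //=; rewrite /g' ltn_eqF // ltnW.
exists g'; split.
- by move=> j; rewrite /g'; case: eqP => _; [exact: c_m | exact: g_m].
- move=> j; rewrite ltnS leq_eqVlt => /predU1P [->|lt_jk].
    by rewrite prev_g' // prev_g /g' eqxx (ltn_eqF (ltnSn k)) gk.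
  rewrite prev_g' ?(ltnW lt_jk) // /g' !ltn_eqF ?ltnS ?(ltnW lt_jk) //.
  exact: adm_g.
- by rewrite /= /g' eqxx (ltn_eqF (ltnSn k)) gk.
- rewrite big_ord_recr /= /g' eqxx addnC; congr addn.
  by apply: eq_bigr => j _; rewrite ltn_eqF.
- by move=> j lt_kj; rewrite /g' gtn_eqF // g_0 // ltnW.
Qed.

Lemma best_shift k0 :
  {in col_pairs, forall s, best k0.+1 s = omap succn (best k0 s)} ->
  forall d, {in col_pairs, forall s, best (k0 + d) s = omap (addn d) (best k0 s)}.
Proof.
move=> per; elim=> [|d IHd] s s_m; first by rewrite addn0; case: (best k0 s).
move: (s_m); rewrite mem_col_pairs => /andP [/eqP s1_m _].
rewrite addnS bestS (eq_extend s1_m IHd) extend_addn -bestS per //.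
by case: (best k0 s) => //= v; rewrite addSnnS.
Qed.

Lemma best_final_shift k0 :
  {in col_pairs, forall s, best k0.+1 s = omap succn (best k0 s)} ->
  forall d, best_final (k0 + d) = omap (addn d) (best_final k0).
Proof.
move=> per d; rewrite /best_final -omin_seq_addn; apply: eq_in_omin_seq => s s_m.
by rewrite best_shift //; case: (admissible _ _ _).
Qed.

Lemma best_final_le k s v : s \in col_pairs -> admissible s.1 s.2 empty_col ->
  best k s = Some v -> exists2 w, best_final k = Some w & w <= v.
Proof.
move=> s_m adm best_s.
apply: (omin_seq_le (g := fun s => if admissible s.1 s.2 empty_col then _ else _) s_m).
by rewrite adm.
Qed.

Lemma best_final_some k w : best_final k = Some w ->
  exists2 s, s \in col_pairs & admissible s.1 s.2 empty_col /\ best k s = Some w.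
Proof. by case/omin_seq_some => s s_m; case: ifP => // adm best_s; exists s. Qed.

Lemma best_periodic_check k :
  (let f := best k in let g := best k.+1 in all (fun s => g s == omap succn (f s)) col_pairs) ->
  {in col_pairs, forall s, best k.+1 s = omap succn (best k s)}.
Proof. by move=> /allP per s /per /eqP. Qed.

End TransferMatrix.

Lemma card_inj_preim (T : finType) (U : eqType) (f : T -> U) (A : {set T}) (L : seq U) :
  injective f -> uniq L ->
  #|[set x in A | f x \in L]| = \sum_(p <- L) [exists x in A, f x == p].
Proof.
move=> f_inj uniq_L.
have mem_L x : (f x \in L : nat) = \sum_(p <- L) (f x == p).
  rewrite -(count_uniq_mem _ uniq_L) -sum1_count big_mkcond /=.
  by apply: eq_bigr => p _; rewrite eq_sym; case: eqP.
rewrite -sum1_card big_mkcond (eq_bigr (fun x => \sum_(p <- L) ((x \in A) && (f x == p)))).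
  rewrite exchange_big /=; apply: eq_bigr => p _.
  case: existsP => [[x0 /andP [x0A /eqP <-]] | none].
    rewrite (bigD1 x0) //= x0A eqxx big1 // => x x_x0.
    by rewrite (inj_eq f_inj) (negbTE x_x0) andbF.
  rewrite big1 // => x _; apply/eqP; rewrite eqb0.
  by apply/andP => -[xA fx_p]; apply: none; exists x; rewrite xA.
move=> x _; rewrite inE; case: (x \in A) => /=; last by rewrite big1.
by rewrite -mem_L; case: (_ \in _).
Qed.

Definition grid_nbrs (p : nat * nat) : seq (nat * nat) :=
  let: (i, j) := p in
  (if j is j'.+1 then [:: (i, j')] else [::]) ++ [:: (i, j.+1); (i.+1, j)] ++
  (if i is i'.+1 then [:: (i', j)] else [::]).

Lemma grid_nbrs_uniq p : uniq (grid_nbrs p).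
Proof. by case: p => [[|i] [|j]] //=; rewrite !inE !xpair_eqE; lia. Qed.

Lemma mem_grid_nbrs p q : (q \in grid_nbrs p) =
  [|| q == (p.1, p.2.+1), q == (p.1.+1, p.2), p == (q.1, q.2.+1) | p == (q.1.+1, q.2)].
Proof. by case: p q => [[|i] [|j]] [i' j'] /=; rewrite !inE !xpair_eqE; lia. Qed.

Section GridColumns.
Variables m n : nat.
Implicit Types (S : {set grid_vertex m n}) (u v w : grid_vertex m n).

Definition coord u : nat * nat := (u.1 : nat, u.2 : nat).

Lemma coord_inj : injective coord.
Proof. by move=> [i j] [i' j'] [/ord_inj -> /ord_inj ->]. Qed.

Definition in_cell S (p : nat * nat) : bool := [exists u in S, coord u == p].

Definition grid_col S j : seq bool := mkseq (fun i => in_cell S (i, j)) m.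

Lemma in_cellP S p : reflect (exists2 u, u \in S & coord u = p) (in_cell S p).
Proof.
by apply: (iffP existsP) => [[u /andP [uS /eqP]] | [u uS <-]]; exists u; rewrite ?uS ?eqxx.
Qed.

Lemma in_cell_coord S u : in_cell S (coord u) = (u \in S).
Proof. by apply/in_cellP/idP => [[w wS /coord_inj <-] | uS]; last exists u. Qed.

Lemma in_cell_bound S i j : in_cell S (i, j) -> (i < m) && (j < n).
Proof. by case/in_cellP => -[i' j'] _ [<- <-]; rewrite !ltn_ord. Qed.

Lemma in_cell_out S i j : (m <= i) || (n <= j) -> in_cell S (i, j) = false.
Proof. by apply: contraTF => /in_cell_bound; rewrite negb_or -!ltnNge. Qed.

Lemma size_grid_col S j : size (grid_col S j) = m.
Proof. exact: size_mkseq. Qed.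

Lemma cell_grid_col S i j : cell (grid_col S j) i = in_cell S (i, j).
Proof.
rewrite /cell; case: (ltnP i m) => [lt_im | le_mi]; first by rewrite nth_mkseq.
by rewrite nth_default ?size_grid_col // in_cell_out ?le_mi.
Qed.

Lemma cell_prev_grid_col S i j :
  cell (prev_col m (grid_col S) j) i = (0 < j) && in_cell S (i, j.-1).
Proof. by case: j => [|j]; rewrite /= ?cell_empty_col ?cell_grid_col. Qed.

Lemma grid_col_out S j : n <= j -> grid_col S j = empty_col m.
Proof.
move=> le_nj; apply: (@eq_from_nth _ false); rewrite ?size_grid_col ?size_empty_col // => i _.
change (cell (grid_col S j) i = cell (empty_col m) i).
by rewrite cell_grid_col cell_empty_col in_cell_out ?le_nj ?orbT.
Qed.

Lemma col_weight_grid_col S j :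
  col_weight (grid_col S j) = \sum_(i < m) in_cell S (nat_of_ord i, j).
Proof.
rewrite /col_weight count_map -sum1_count big_mkcond /=.
have -> : iota 0 m = index_iota 0 m by rewrite /index_iota subn0.
by rewrite big_mkord; apply: eq_bigr => i _; case: (in_cell S (nat_of_ord i, j)).
Qed.

Lemma card_grid_cols S : #|S| = \sum_(j < n) col_weight (grid_col S j).
Proof.
have -> : #|S| = \sum_(u : grid_vertex m n) in_cell S (coord u).
  rewrite -sum1_card big_mkcond /=.
  by apply: eq_bigr => u _; rewrite in_cell_coord; case: (u \in S).
pose cellS (i : 'I_m) (j : 'I_n) : nat := in_cell S (nat_of_ord i, nat_of_ord j).
rewrite -(pair_big xpredT xpredT cellS).
by rewrite exchange_big /=; apply: eq_bigr => j _; rewrite col_weight_grid_col.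
Qed.

Definition set_of_cols (g : nat -> seq bool) : {set grid_vertex m n} :=
  [set u : grid_vertex m n | cell (g u.2) u.1].

Lemma grid_col_of (g : nat -> seq bool) :
  (forall j, size (g j) = m) -> (forall j, n <= j -> g j = empty_col m) ->
  forall j, grid_col (set_of_cols g) j = g j.
Proof.
move=> g_m g_out j; apply: (@eq_from_nth _ false); rewrite ?size_grid_col ?g_m // => i lt_im.
change (cell (grid_col (set_of_cols g) j) i = cell (g j) i).
rewrite cell_grid_col; case: (ltnP j n) => [lt_jn | le_nj].
  by rewrite (in_cell_coord _ (Ordinal lt_im, Ordinal lt_jn)) inE.
by rewrite in_cell_out ?le_nj ?orbT // g_out // cell_empty_col.
Qed.

Lemma grid_adjE u v : grid_adj u v = (coord v \in grid_nbrs (coord u)).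
Proof. by rewrite mem_grid_nbrs /grid_adj /nat_adj /= !xpair_eqE -!val_eqE /=; lia. Qed.

Lemma card_grid_nbrs S v :
  #|[set u in S | grid_adj v u]| = \sum_(p <- grid_nbrs (coord v)) in_cell S p.
Proof.
rewrite -(card_inj_preim _ coord_inj (grid_nbrs_uniq _)).
by apply: eq_card => u; rewrite !inE grid_adjE.
Qed.

Lemma nbr_count_grid_col S i j :
  nbr_count (prev_col m (grid_col S) j) (grid_col S j) (grid_col S j.+1) i =
  \sum_(p <- grid_nbrs (i, j)) in_cell S p.
Proof.
rewrite /nbr_count cell_prev_grid_col !cell_grid_col.
by case: i => [|i]; case: j => [|j]; rewrite /= !big_cons big_nil ?cell_grid_col; lia.
Qed.

Lemma admissible_grid_colP S j :
  reflect (forall i, i < m ->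
             [&& ~~ (in_cell S (i, j) && in_cell S (i.+1, j)),
                 ~~ ((0 < j) && in_cell S (i, j.-1) && in_cell S (i, j))
               & in_cell S (i, j) || (1 <= \sum_(p <- grid_nbrs (i, j)) in_cell S p <= 2)])
          (admissible m (prev_col m (grid_col S) j) (grid_col S j) (grid_col S j.+1)).
Proof.
apply: (iffP (admissibleP _ _ _ _)) => adm i /adm;
  by rewrite nbr_count_grid_col cell_prev_grid_col !cell_grid_col.
Qed.

Lemma independent_nbr_cells S p q :
  independent S -> in_cell S p -> in_cell S q -> q \in grid_nbrs p = false.
Proof.
move=> /forallP ind /in_cellP [u uS <-] /in_cellP [w wS <-].
by move: (ind u); rewrite uS /= => /forallP /(_ w); rewrite wS /= grid_adjE => /negbTE.
Qed.

Lemma admissible_no_right_pair S i j :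
  admissible_upto m (grid_col S) n -> in_cell S (i, j) -> in_cell S (i, j.+1) -> False.
Proof.
move=> adm c1 c2; have /andP [lt_im lt_jn] := in_cell_bound c2.
by case/admissible_grid_colP/(_ i lt_im)/and3P: (adm _ lt_jn); rewrite /= c1 c2.
Qed.

Lemma admissible_no_below_pair S i j :
  admissible_upto m (grid_col S) n -> in_cell S (i, j) -> in_cell S (i.+1, j) -> False.
Proof.
move=> adm c1 c2; have /andP [lt_im lt_jn] := in_cell_bound c1.
by case/admissible_grid_colP/(_ i lt_im)/and3P: (adm _ lt_jn); rewrite c1 c2.
Qed.

Lemma independent_of_admissible S : admissible_upto m (grid_col S) n -> independent S.
Proof.
move=> adm; apply/forallP => u; apply/implyP => uS; apply/forallP => w; apply/implyP => wS.
have [cu cw] : in_cell S (coord u) /\ in_cell S (coord w) by rewrite !in_cell_coord.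
rewrite grid_adjE mem_grid_nbrs; apply/negP; case/or4P => /eqP e; move: cu cw; rewrite e.
- exact: admissible_no_right_pair.
- exact: admissible_no_below_pair.
- by move=> c1 c2; apply: admissible_no_right_pair c2 c1.
- by move=> c1 c2; apply: admissible_no_below_pair c2 c1.
Qed.

Lemma indep_12_setP S : reflect (admissible_upto m (grid_col S) n) (indep_12_set S).
Proof.
apply: (iffP andP) => [[ind /forallP dom] j lt_jn | adm].
  apply/admissible_grid_colP => i lt_im; apply/and3P; split.
  - apply/negP => /andP [c1 c2].
    by move: (independent_nbr_cells ind c1 c2); rewrite mem_grid_nbrs eqxx orbT.
  - case: j lt_jn => [|j] //= lt_jn; apply/negP => /andP [c1 c2].
    by move: (independent_nbr_cells ind c1 c2); rewrite mem_grid_nbrs eqxx.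
  - pose v : grid_vertex m n := (Ordinal lt_im, Ordinal lt_jn).
    move: (dom v); rewrite inE -(in_cell_coord S v) card_grid_nbrs.
    by case: (in_cell S (coord v)).
split; first exact: independent_of_admissible.
apply/forallP => v; apply/implyP; rewrite inE -in_cell_coord => vS.
case/admissible_grid_colP/(_ _ (ltn_ord v.1))/and3P: (adm _ (ltn_ord v.2)) => _ _.
by rewrite card_grid_nbrs (negbTE vS).
Qed.

End GridColumns.

Theorem i12_grid_eq_of_best_final m k t : best_final m k = Some t -> i12_grid_eq m k.+1 t.
Proof.
move=> best_t; split.
  have [s s_m [adm_s best_s]] := best_final_some best_t.
  have [g [g_m adm_g g_s sum_g g_out]] := best_some s_m best_s.
  have col_g := grid_col_of (n := k.+1) g_m g_out.
  exists (set_of_cols m k.+1 g); apply/andP; split; last first.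
    by rewrite card_grid_cols -sum_g; under eq_bigr do rewrite col_g.
  apply/indep_12_setP/(eq_admissible_upto (fun j => esym (col_g j)))/admissible_uptoS.
  by split=> //; rewrite (g_out k.+1) //; move: adm_s; rewrite -g_s.
move=> S /indep_12_setP /admissible_uptoS [adm_S adm_k].
have [v best_v le_v] := best_le (size_grid_col S) adm_S.
have s_m : (prev_col m (grid_col S) k, grid_col S k) \in col_pairs m.
  by rewrite mem_col_pairs /= (size_prev_col _ (size_grid_col S)) size_grid_col eqxx.
rewrite (grid_col_out S (leqnn _)) in adm_k.
have [w] := best_final_le s_m adm_k best_v; rewrite best_t => -[<-] le_tv.
by rewrite card_grid_cols (leq_trans le_tv).
Qed.

Lemma best_final_P4_small :
  all (fun k => best_final 4 k == Some (if k.+1 \in [:: 5; 6; 9] then k.+2 else k.+1)) (iota 3 9).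
Proof. by vm_compute. Qed.

Lemma best_P4_periodic : {in col_pairs 4, forall s, best 4 12 s = omap succn (best 4 11 s)}.
Proof. by apply: best_periodic_check; vm_compute. Qed.

Lemma best_final_P4 k :
  3 <= k -> best_final 4 k = Some (if k.+1 \in [:: 5; 6; 9] then k.+2 else k.+1).
Proof.
move=> le3k; have [le_k11 | lt11k] := leqP k 11.
  by apply/eqP/(allP best_final_P4_small); rewrite mem_iota; lia.
rewrite -(subnKC (ltnW lt11k)) (best_final_shift best_P4_periodic).
rewrite (eqP (allP best_final_P4_small 11 _)) ?mem_iota //=.
by congr Some; lia.
Qed.

Theorem mainTheorem5 (n : nat) (hn : 4 <= n) :
  i12_grid_eq 4 n (if n \in [:: 5; 6; 9] then n.+1 else n).
Proof. by case: n hn => [|k] // hn; apply/i12_grid_eq_of_best_final/best_final_P4. Qed.
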